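(* Let $P,Q$ be finite posets, $R$ an indecomposable commutative unital ring, and $\Phi:I^3(P,R)\to I^3(Q,R)$ an $R$-linear algebra isomorphism. Then $\Phi(J^3_1(P,R))=J^3_1(Q,R)$, and there is a bijection $\varphi:P\to Q$ such that $\Phi(e_x)-e_{\varphi(x)}\in J^3_1(Q,R)$ for all $x\in P$ (equivalently, the induced isomorphism $I^3(P,R)/J^3_1(P,R)\to I^3(Q,R)/J^3_1(Q,R)$ maps $e_x+J^3_1(P,R)$ to $e_{\varphi(x)}+J^3_1(Q,R)$).
   Context: A commutative ring is indecomposable if its only idempotents are $0$ and $1$. For a finite poset $P$, $P^3_\le=\{(x,y,z)\in P^3: x\le y\le z\}$, and $I^3(P,R)$ is the $R$-module of functions $f:P^3_\le\to R$ with multiplication $(fg)(x_1,x_2,x_3)=\sum f(x_1,y_1,y_2)g(y_1,y_2,x_3)$ over all $x_1\le y_1\le x_2\le y_2\le x_3$. For $x\le y\le z$, $e_{xyz}$ is the function equal to $1$ at $(x,y,z)$ and $0$ elsewhere, and $e_x:=e_{xxx}$. $J^3_1(P,R)=\{f\in I^3(P,R): f(x,x,x)=0 \text{ for all } x\in P\}$, an ideal. *)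

From HB Require Import structures.
From mathcomp Require Import all_boot all_order all_algebra.
Set Implicit Arguments. Unset Strict Implicit. Unset Printing Implicit Defensive.
Import Order.TTheory GRing.Theory.
Local Open Scope ring_scope.
Local Open Scope order_scope.

Section I3.
Variables (d : Order.disp_t) (P : finPOrderType d) (R : comNzRingType).

Definition is_chain3 (t : P * P * P) : bool := (t.1.1 <= t.1.2) && (t.1.2 <= t.2).
Definition chain3 := {t : P * P * P | is_chain3 t}.

Definition I3 := {ffun chain3 -> R^o}.
HB.instance Definition _ := GRing.Lmodule.on I3.

Definition at3 (f : I3) (x y z : P) : R :=
  if @insub _ is_chain3 chain3 (x, y, z) is Some t then f t else 0%R.

Definition mul3 (f g : I3) : I3 :=
  [ffun t : chain3 =>
     let: (x1, x2, x3) := val t in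
     \sum_(y1 : P) \sum_(y2 : P)
        (if [&& (x1 <= y1)%O, (y1 <= x2)%O, (x2 <= y2)%O & (y2 <= x3)%O]
         then (at3 f x1 y1 y2 * at3 g y1 y2 x3)%R else 0%R)].

Definition e3 (x y z : P) : I3 := [ffun t : chain3 => ((val t == (x, y, z))%:R)%R].
Definition e1 (x : P) : I3 := e3 x x x.

Definition J31 (f : I3) : Prop := forall x : P, at3 f x x x = 0%R.
End I3.

Definition indecomposable (R : comNzRingType) : Prop :=
  forall e : R, (e * e = e)%R -> e = 0%R \/ e = 1%R.

From HB Require Import structures.
From mathcomp Require Import all_boot all_order all_algebra.
Set Implicit Arguments. Unset Strict Implicit. Unset Printing Implicit Defensive.
Import Order.POrderTheory GRing.Theory.
Local Open Scope ring_scope.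
Local Open Scope order_scope.

(* For q in Q, chi_q f := Phi(f)(q,q,q) is an R-linear multiplicative functional
   on I^3(P,R).  Since e_x f e_x = f(x,x,x) e_x, such a functional with
   chi(e_x) = 1 is evaluation at (x,x,x); since e_abc = e_abb e_b e_bbc, one that
   kills every e_x is zero.  The chi(e_x) are orthogonal idempotents, hence 0 or 1
   as R is indecomposable, and chi_q(Phi^-1 e_q) = 1, so chi_q is evaluation at
   (x,x,x) for exactly one x; in particular Phi maps J^3_1 into J^3_1.  Evaluating
   chi_q at Phi^-1 e_q shows chi_q(e_x) = 1 iff chi'_x(e_q) = 1, where chi' is the
   functional of Phi^-1, so this relation is the graph of a bijection P -> Q. *)

Section LinearFor.
Variables (R : pzRingType) (U : lmodType R) (V : zmodType).
Variables (s : GRing.Scale.law R V) (f : U -> V).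
Hypothesis f_lin : linear_for s f.

Let fL : {linear U -> V | s} := HB.pack f (GRing.isLinear.Build R U V s f f_lin).

Lemma linear_for0 : f 0 = 0. Proof. exact: (raddf0 fL). Qed.
Lemma linear_forB u v : f (u - v) = f u - f v. Proof. exact: (raddfB fL). Qed.
Lemma linear_forZ a u : f (a *: u) = s a (f u). Proof. exact: (linearZ_LR fL). Qed.
Lemma linear_for_sum (I : finType) (F : I -> U) : f (\sum_i F i) = \sum_i f (F i).
Proof. exact: (raddf_sum fL). Qed.

End LinearFor.

Lemma linear_can2 (R : pzRingType) (U V : lmodType R) (f : U -> V) g :
  cancel f g -> cancel g f -> linear f -> linear g.
Proof. by move=> fK gK f_lin a u v; apply: (canLR fK); rewrite f_lin !gK. Qed.

Lemma morph2_can2 (aT rT : Type) (f : aT -> rT) g aop rop :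
  cancel f g -> cancel g f ->
  {morph f : x y / aop x y >-> rop x y} -> {morph g : x y / rop x y >-> aop x y}.
Proof. by move=> fK gK fM x y; apply: (canLR fK); rewrite fM !gK. Qed.

Lemma exists_bijective_graph (T U : choiceType) (r : T -> U -> bool) :
  (forall x, exists y, r x y) -> (forall y, exists x, r x y) ->
  (forall x y y', r x y -> r x y' -> y = y') ->
  (forall x x' y, r x y -> r x' y -> x = x') ->
  exists2 f : T -> U, bijective f & forall x y, r x y = (y == f x).
Proof.
move=> totl totr uniql uniqr.
pose f x := xchoose (totl x); pose g y := xchoose (totr y).
have rf x : r x (f x) := xchooseP (totl x).
have rg y : r (g y) y := xchooseP (totr y).
exists f; first by exists g => [x | y]; [apply: uniqr (rf x) | apply: uniql (rg y)].
by move=> x y; apply/idP/eqP => [/(uniql _ _ _ (rf x))|->].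
Qed.

Lemma sum2_delta (I J : finType) (V : nmodType) i0 j0 (F : I -> J -> V) :
  (forall i j, (i, j) != (i0, j0) -> F i j = 0) ->
  \sum_i \sum_j F i j = F i0 j0.
Proof.
move=> F0; rewrite pair_big (bigD1 (i0, j0)) //= big1 ?addr0 //.
by case=> i j /F0.
Qed.
Arguments sum2_delta {I J V} i0 j0 {F}.

Section IncidenceAlgebra.
Variables (d : Order.disp_t) (P : finPOrderType d) (R : comNzRingType).
Implicit Types (f g : I3 P R) (a b c x y z : P).

Lemma at3_scalar x y z : scalar (fun f => at3 f x y z).
Proof.
by move=> k f g; rewrite /at3; case: insub => [t|]; rewrite ?ffunE // mulr0 addr0.
Qed.

Lemma at30 x y z : at3 (0 : I3 P R) x y z = 0.
Proof. exact: (linear_for0 (at3_scalar x y z)). Qed.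

Lemma at3Z k f x y z : at3 (k *: f) x y z = k * at3 f x y z.
Proof. exact: (linear_forZ (at3_scalar x y z)). Qed.

Lemma at3B f g x y z : at3 (f - g) x y z = at3 f x y z - at3 g x y z.
Proof. exact: (linear_forB (at3_scalar x y z)). Qed.

Lemma at3_chain f (t : chain3 P) : at3 f (val t).1.1 (val t).1.2 (val t).2 = f t.
Proof.
rewrite /at3 -!surjective_pairing.
by case: insubP => [u _ /val_inj->|]; last rewrite (valP t).
Qed.

Lemma at3_nonchain f x y z : ~~ is_chain3 (x, y, z) -> at3 f x y z = 0.
Proof. by move=> ncxyz; rewrite /at3 insubF //; apply: negbTE. Qed.

Lemma eq_I3 f g : (forall x y z, at3 f x y z = at3 g x y z) -> f = g.
Proof. by move=> fg; apply/ffunP => t; rewrite -!at3_chain. Qed.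

Lemma at3_e3 a b c x y z : a <= b -> b <= c ->
  at3 (e3 R a b c) x y z = ((x == a) && (y == b) && (z == c))%:R.
Proof.
move=> le_ab le_bc; rewrite /at3; case: insubP => [t _ eq_t|nc].
  by rewrite ffunE eq_t !xpair_eqE. case: andP => [[/andP[/eqP ea /eqP eb] /eqP ec]|//].
by move: nc; rewrite ea eb ec /is_chain3 /= le_ab le_bc.
Qed.

Lemma at3_e1 x y : at3 (e1 R x) y y y = (y == x)%:R.
Proof. by rewrite at3_e3 // !andbb. Qed.

Lemma at3_mul f g x1 x2 x3 : at3 (mul3 f g) x1 x2 x3 =
  \sum_(y1 : P) \sum_(y2 : P) if [&& x1 <= y1, y1 <= x2, x2 <= y2 & y2 <= x3]%O
                               then at3 f x1 y1 y2 * at3 g y1 y2 x3 else 0.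
Proof.
rewrite {1}/at3; case: insubP => [t _ eq_t|nc]; first by rewrite ffunE eq_t.
rewrite big1 // => y1 _; rewrite big1 // => y2 _.
case: ifP => // /and4P[x1y1 y1x2 x2y2 y2x3]; move: nc.
by rewrite /is_chain3 /= (le_trans x1y1 y1x2) (le_trans x2y2 y2x3).
Qed.

Lemma at3_mul_diag f g x : at3 (mul3 f g) x x x = at3 f x x x * at3 g x x x.
Proof.
rewrite at3_mul (sum2_delta x x) ?lexx // => y1 y2 ne.
case: ifP => // /and4P[xy1 y1x xy2 y2x]; case/eqP: ne.
by apply/eqP; rewrite xpair_eqE !eq_le xy1 y1x xy2 y2x.
Qed.

Lemma at3_mul_e3l a b c g x1 x2 x3 : a <= b -> b <= c ->
  at3 (mul3 (e3 R a b c) g) x1 x2 x3 =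
  if [&& x1 == a, b <= x2 & x2 <= c] then at3 g b c x3 else 0.
Proof.
move=> le_ab le_bc; rewrite at3_mul (sum2_delta b c) => [|y1 y2 ne]; last first.
  by rewrite at3_e3 // -andbA -xpair_eqE (negbTE ne) andbF mulr0n mul0r if_same.
rewrite at3_e3 // !eqxx !andbT; have [->|ne_x1a] := eqVneq x1 a; last first.
  by rewrite mulr0n mul0r if_same.
rewrite mulr1n mul1r le_ab /=; case: (b <= x2) (x2 <= c) => [] [] //=.
by case c_x3: (c <= x3); rewrite // at3_nonchain // /is_chain3 /= le_bc c_x3.
Qed.

Lemma at3_mul_e3r a b c h x1 x2 x3 : a <= b -> b <= c ->
  at3 (mul3 h (e3 R a b c)) x1 x2 x3 =
  if [&& x3 == c, a <= x2 & x2 <= b] then at3 h x1 a b else 0.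
Proof.
move=> le_ab le_bc; rewrite at3_mul (sum2_delta a b) => [|y1 y2 ne]; last first.
  by rewrite at3_e3 // -xpair_eqE (negbTE ne) mulr0n mulr0 if_same.
rewrite at3_e3 // !eqxx /=; have [->|ne_x3c] := eqVneq x3 c; last first.
  by rewrite mulr0n mulr0 if_same.
rewrite mulr1n mulr1 le_bc !andbT.
case: (a <= x2) (x2 <= b) => [] []; rewrite /= ?andbT ?andbF //.
by case x1_a: (x1 <= a); rewrite // at3_nonchain // /is_chain3 /= x1_a.
Qed.

Lemma e1_idem x : mul3 (e1 R x) (e1 R x) = e1 R x.
Proof.
apply: eq_I3 => x1 x2 x3; rewrite at3_mul_e3l // !at3_e3 // !eqxx -eq_le.
by rewrite [x == x2]eq_sym; case: (x1 == x); case: (x2 == x).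
Qed.

Lemma e1_orth x y : x != y -> mul3 (e1 R x) (e1 R y) = 0.
Proof.
move=> ne_xy; apply: eq_I3 => x1 x2 x3.
by rewrite at3_mul_e3l // at3_e3 // (negbTE ne_xy) mulr0n at30 if_same.
Qed.

Lemma e3_factor a b c : a <= b -> b <= c ->
  e3 R a b c = mul3 (e3 R a b b) (mul3 (e1 R b) (e3 R b b c)).
Proof.
move=> le_ab le_bc; apply: eq_I3 => x1 x2 x3.
rewrite at3_e3 // at3_mul_e3l // at3_mul_e3l // at3_e3 // !eqxx !lexx -eq_le.
by rewrite [b == x2]eq_sym; case: (x1 == a); case: (x2 == b).
Qed.

Lemma e1_sandwich f x : mul3 (mul3 (e1 R x) f) (e1 R x) = at3 f x x x *: e1 R x.
Proof.
apply: eq_I3 => x1 x2 x3; rewrite at3_mul_e3r // at3_mul_e3l // at3Z at3_e3 //.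
rewrite !lexx -eq_le [x == x2]eq_sym.
by case: (x1 == x); case: (x2 == x); case: (x3 == x); rewrite ?mulr1 ?mulr0.
Qed.

Lemma e3_expansion f :
  f = \sum_(t : chain3 P) f t *: e3 R (val t).1.1 (val t).1.2 (val t).2.
Proof.
apply/ffunP => s; rewrite sum_ffunE (bigD1 s) //= big1 => [|t ne_ts].
  by rewrite !ffunE -!surjective_pairing eqxx addr0; apply/esym/mulr1.
rewrite !ffunE -!surjective_pairing (inj_eq val_inj) eq_sym (negbTE ne_ts).
exact: mulr0.
Qed.

End IncidenceAlgebra.

Section Character.
Variables (d : Order.disp_t) (P : finPOrderType d) (R : comNzRingType).
Variable chi : I3 P R -> R.
Hypotheses (chi_scalar : scalar chi) (chiM : {morph chi : f g / mul3 f g >-> f * g}).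
Implicit Types (f : I3 P R) (x y : P).

Lemma char_e1_idem x : chi (e1 R x) * chi (e1 R x) = chi (e1 R x).
Proof. by rewrite -chiM e1_idem. Qed.

Lemma char_e1_uniq x y : chi (e1 R x) = 1 -> chi (e1 R y) = 1 -> x = y.
Proof.
move=> chix chiy; apply/eqP/negP => /negP/e1_orth/(congr1 chi).
by rewrite chiM chix chiy mulr1 (linear_for0 chi_scalar); apply/eqP/oner_neq0.
Qed.

Lemma char_at3E x f : chi (e1 R x) = 1 -> chi f = at3 f x x x.
Proof.
move=> chix; have := congr1 chi (e1_sandwich f x).
by rewrite !chiM (linear_forZ chi_scalar) /= chix !mulr1 mul1r.
Qed.

Lemma char_eq0 : (forall x, chi (e1 R x) = 0) -> forall f, chi f = 0.
Proof.
move=> chi0 f; rewrite (e3_expansion f) (linear_for_sum chi_scalar) big1 // => t _.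
have /andP[le_ab le_bc] := valP t.
by rewrite (linear_forZ chi_scalar) (e3_factor R le_ab le_bc) !chiM chi0 mul0r /= !mulr0.
Qed.

Hypothesis R_indec : indecomposable R.

Lemma char_e1E x : chi (e1 R x) = (chi (e1 R x) == 1)%:R.
Proof. by case: (R_indec (char_e1_idem x)) => ->; rewrite ?eqxx // eq_sym oner_eq0. Qed.

Lemma char_support f : chi f != 0 -> exists x, chi (e1 R x) = 1.
Proof.
move=> chif_neq0; have [x /eqP chix|none] := pickP (fun x => chi (e1 R x) == 1).
  by exists x.
by case/eqP: chif_neq0; apply: char_eq0 => x; rewrite char_e1E none.
Qed.

End Character.

Section DiagonalCharacter.
Variables (dP dQ : Order.disp_t) (P : finPOrderType dP) (Q : finPOrderType dQ).
Variables (R : comNzRingType) (Phi : I3 P R -> I3 Q R) (Psi : I3 Q R -> I3 P R).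
Hypotheses (Phi_lin : linear Phi) (PhiM : {morph Phi : f g / mul3 f g}).
Hypotheses (PsiK : cancel Psi Phi) (R_indec : indecomposable R).

Definition diag_char (q : Q) (f : I3 P R) : R := at3 (Phi f) q q q.

Lemma diag_char_scalar q : scalar (diag_char q).
Proof. by move=> a f g; rewrite /diag_char Phi_lin; apply: at3_scalar. Qed.

Lemma diag_charM q : {morph diag_char q : f g / mul3 f g >-> f * g}.
Proof. by move=> f g; rewrite /diag_char PhiM at3_mul_diag. Qed.

Lemma diag_char_support q : exists x, diag_char q (e1 R x) = 1.
Proof.
apply: (char_support (diag_char_scalar q) (diag_charM q) R_indec (f := Psi (e1 R q))).
by rewrite /diag_char PsiK at3_e1 eqxx oner_neq0.
Qed.

Lemma J31_morph f : J31 f -> J31 (Phi f).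
Proof.
move=> Jf q; have [x chix] := diag_char_support q.
by rewrite -/(diag_char q f) (char_at3E (diag_char_scalar q) (diag_charM q) _ chix).
Qed.

Lemma diag_char_transpose x q :
  diag_char q (e1 R x) = 1 -> at3 (Psi (e1 R q)) x x x = 1.
Proof.
move=> chix; rewrite -(char_at3E (diag_char_scalar q) (diag_charM q) _ chix).
by rewrite /diag_char PsiK at3_e1 eqxx.
Qed.

End DiagonalCharacter.

Lemma diag_char_e1_graph (dP dQ : Order.disp_t) (P : finPOrderType dP)
    (Q : finPOrderType dQ) (R : comNzRingType) (Phi : I3 P R -> I3 Q R) Psi :
  indecomposable R -> cancel Phi Psi -> cancel Psi Phi ->
  linear Phi -> {morph Phi : f g / mul3 f g} ->
  exists2 varphi : P -> Q, bijective varphi &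
    forall x q, diag_char Phi q (e1 R x) = (q == varphi x)%:R.
Proof.
move=> R_indec PhiK PsiK Phi_lin PhiM.
have Psi_lin := linear_can2 PhiK PsiK Phi_lin.
have PsiM := morph2_can2 PhiK PsiK PhiM.
pose r x q := diag_char Phi q (e1 R x) == 1.
have rPsi x q : r x q -> diag_char Psi x (e1 R q) = 1.
  by move/eqP; apply: diag_char_transpose.
have [||x q q'|x x' q|varphi bij_varphi rE] := @exists_bijective_graph _ _ r.
- move=> x; have [q chiq] := diag_char_support Psi_lin PsiM PhiK R_indec x.
  by exists q; apply/eqP; apply: diag_char_transpose chiq.
- move=> q; have [x chix] := diag_char_support Phi_lin PhiM PsiK R_indec q.
  by exists x; apply/eqP.
- move=> /rPsi chiq /rPsi chiq'.
  exact: (char_e1_uniq (diag_char_scalar Psi_lin x) (diag_charM PsiM x) chiq chiq').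
- move=> /eqP chix /eqP chix'.
  exact: (char_e1_uniq (diag_char_scalar Phi_lin q) (diag_charM PhiM q) chix chix').
exists varphi => // x q.
by rewrite (char_e1E (diag_charM PhiM q) R_indec) -/(r x q) rE.
Qed.

Theorem corollary3p2 (dP dQ : Order.disp_t) (P : finPOrderType dP)
  (Q : finPOrderType dQ) (R : comNzRingType) (Phi : I3 P R -> I3 Q R) :
  indecomposable R ->
  bijective Phi ->
  (forall (a : R) (f g : I3 P R), Phi (a *: f + g) = a *: Phi f + Phi g) ->
  (forall f g : I3 P R, Phi (mul3 f g) = mul3 (Phi f) (Phi g)) ->
  (forall g : I3 Q R, (exists2 f : I3 P R, J31 f & Phi f = g) <-> J31 g) /\
  (exists varphi : P -> Q, bijective varphi /\
     forall x : P, J31 (Phi (e1 R x) - e1 R (varphi x))).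
Proof.
move=> R_indec [Psi PhiK PsiK] Phi_lin PhiM.
split=> [g|].
  split=> [[f Jf <-]|Jg]; first exact: (J31_morph Phi_lin PhiM PsiK R_indec Jf).
  have Psi_lin := linear_can2 PhiK PsiK Phi_lin.
  have PsiM := morph2_can2 PhiK PsiK PhiM.
  by exists (Psi g); [exact: (J31_morph Psi_lin PsiM PhiK R_indec Jg) | exact: PsiK].
have [varphi bij_varphi diag_charE] := diag_char_e1_graph R_indec PhiK PsiK Phi_lin PhiM.
exists varphi; split=> // x q.
by rewrite at3B -/(diag_char Phi q _) diag_charE at3_e1 subrr.
Qed.
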